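(* Under the Depth-First Leader-Follower (DFLF) strategy in an environment $R$ with a single door $s$ (as defined in the context), the following holds for every pixel $q\in R$ and every time $t$. If $q$ is unoccupied at both time $t$ and time $t+1$, then $q$ was never occupied at any time before $t$.
   Context: Pixels are the unit squares of the integer grid, identified with their lower-left corners $(i,j)\in\mathbb{Z}^2$. Two pixels are neighbors if they share an edge, so $(i,j)$ has the four neighbors $(i\pm1,j)$ and $(i,j\pm1)$. The environment $R$ is a finite set of pixels that is connected under this neighbor relation. It contains a single distinguished door pixel $s\in R$. Time is discrete, $t=0,1,2,\dots$. At each time, every pixel of $R$ holds at most one robot. $p(r,t)$ denotes the pixel occupied by robot $r$ at time $t$, and $\mathrm{prev}(r,t)=p(r,t-1)$. In one time step a robot either stays where it is or moves to a neighboring pixel of $R$ that is unoccupied. Vacating rule: if a robot occupies pixel $q$ at time $t$ and a different pixel at time $t+1$, then no robot occupies $q$ at time $t+1$; so the earliest a vacated pixel can be re-entered is time $t+2$. At time $0$ exactly one robot is present, on $s$. Door rule: whenever the robot on $s$ leaves, a new robot appears on $s$ as soon as the vacating rule allows. A pixel of $R$ is a frontier pixel at time $t$ if no robot has occupied it at any time $\le t$. The DFLF strategy works as follows. - Each robot is either moving or stopped. A moving robot is either the leader or a follower. - The first robot is the leader. Each newly appearing robot becomes the successor of the robot that most recently left the door, and that robot becomes its predecessor $\mathrm{pred}(r)$. These relations never change. - At each step, the leader behaves as follows. If the leader has a neighboring frontier pixel, it moves to one of them (chosen arbitrarily). Otherwise it becomes stopped permanently and leadership passes to its successor. If the leader has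 no frontier neighbor and is on the door $s$, the algorithm halts. - A follower $r$ moves at time $t$ to the pixel $\mathrm{prev}(\mathrm{pred}(r),t)$ previously occupied by its predecessor. - A stopped robot never moves again. Makespan: the first time $t^*$ at which every pixel of $R$ is occupied. *)

From Stdlib Require Import ZArith List Relations.
Import ListNotations.
Open Scope Z_scope.

(** Pixels are identified with their lower-left corners. *)
Definition pixel : Type := (Z * Z)%type.

Definition adj (x y : pixel) : Prop :=
  Z.abs (fst x - fst y) + Z.abs (snd x - snd y) = 1.

Definition connected_env (R : list pixel) : Prop :=
  forall x y, In x R -> In y R ->
    clos_refl_trans pixel (fun a b => In a R /\ In b R /\ adj a b) x y.

Definition environment (R : list pixel) (s : pixel) : Prop :=
  connected_env R /\ In s R.

(** A trajectory: [p r t] is the pixel occupied by robot [r] at time [t]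
    ([None] if robot [r] has not appeared yet).  Robots are numbered
    0,1,2,... in their order of appearance at the door; robot [r+1] is the
    successor of robot [r]. *)
Definition trajectory : Type := nat -> nat -> option pixel.

Definition occupied (p : trajectory) (t : nat) (q : pixel) : Prop :=
  exists r, p r t = Some q.

Definition frontier (R : list pixel) (p : trajectory) (t : nat) (q : pixel)
  : Prop :=
  In q R /\ forall t', (t' <= t)%nat -> ~ occupied p t' q.

Definition halt_cond (R : list pixel) (s : pixel) (p : trajectory)
  (lead : nat -> nat) (t0 : nat) : Prop :=
  p (lead t0) t0 = Some s /\ ~ (exists y, adj s y /\ frontier R p t0 y).

Definition halted (R : list pixel) (s : pixel) (p : trajectory)
  (lead : nat -> nat) (t : nat) : Prop :=
  exists t0, (t0 <= t)%nat /\ halt_cond R s p lead t0.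

Definition physical (R : list pixel) (p : trajectory) : Prop :=
  (forall r t x, p r t = Some x -> In x R) /\
  (forall r r' t x, p r t = Some x -> p r' t = Some x -> r = r') /\
  (forall r t x y, p r t = Some x -> p r (S t) = Some y -> y <> x ->
      adj x y /\ ~ occupied p t y) /\
  (forall r t x y, p r t = Some x -> p r (S t) = Some y -> y <> x ->
      ~ occupied p (S t) x).

(** Door rule (robots appear only at the door, robot [r+1] appearing as soon
    as the vacating rule allows after robot [r] leaves the door). *)
Definition door_rule (s : pixel) (p : trajectory) : Prop :=
  p 0%nat 0%nat = Some s /\
  (forall r, p (S r) 0%nat = None) /\
  (forall r t, p r t = Some s -> p r (S t) <> Some s ->
      p (S r) (S t) = None /\ p (S r) (S (S t)) = Some s) /\
  (forall r t, p r t = None -> p r (S t) <> None ->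
      exists r' t', r = S r' /\ t = S t' /\
        p r' t' = Some s /\ p r' (S t') <> Some s).

(** The DFLF strategy; [lead t] is the index of the leader at time [t].
    Robots with index < [lead t] are stopped, those with index > [lead t]
    are followers. *)
Definition dflf_rules (R : list pixel) (s : pixel) (p : trajectory)
  (lead : nat -> nat) : Prop :=
  lead 0%nat = 0%nat /\
  (forall t, halted R s p lead t ->
     lead (S t) = lead t /\ forall r, p r (S t) = p r t) /\
  (forall t x, ~ halted R s p lead t -> p (lead t) t = Some x ->
     (exists y, adj x y /\ frontier R p t y) ->
     lead (S t) = lead t /\
     exists y, adj x y /\ frontier R p t y /\ p (lead t) (S t) = Some y) /\
  (forall t x, ~ halted R s p lead t -> p (lead t) t = Some x ->
     ~ (exists y, adj x y /\ frontier R p t y) ->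
     lead (S t) = S (lead t) /\ p (lead t) (S t) = Some x) /\
  (forall t, ~ halted R s p lead t -> p (lead t) t = None ->
     lead (S t) = lead t) /\
  (forall t r, ~ halted R s p lead t -> (r < lead t)%nat ->
     p r (S t) = p r t) /\
  (forall t r, ~ halted R s p lead (S t) -> (lead (S t) < r)%nat ->
     p r (S t) <> None -> p r (S (S t)) = p (r - 1)%nat t).

Definition dflf_run (R : list pixel) (s : pixel) (p : trajectory)
  (lead : nat -> nat) : Prop :=
  physical R p /\ door_rule s p /\ dflf_rules R s p lead.

(** A robot that leaves a pixel is replaced there two steps later: by its
    successor, which retraces its path, or, if the pixel is the door, by a
    newly appearing robot.  The successor is present when needed because every
    robot started on the door and its successor appears as soon as it leaves.
    Nor can the run halt right after a move: no robot ever enters the door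
    from elsewhere, and the successor of a robot standing on the door has not
    appeared yet.  Hence a pixel occupied once is, from then on, occupied at
    every time or at the next one, so two consecutive empty times exclude any
    earlier occupation. *)

From Stdlib Require Import ZArith List Lia Classical.
Open Scope nat_scope.

Section DFLF.

Variables (R : list pixel) (s : pixel) (p : trajectory) (lead : nat -> nat).
Hypothesis run : dflf_run R s p lead.

Lemma occupant_unique r r' t x : p r t = Some x -> p r' t = Some x -> r = r'.
Proof. destruct run as [(_ & H & _) _]; apply H. Qed.

Lemma first_robot_on_door : p 0 0 = Some s.
Proof. destruct run as (_ & (H & _) & _); exact H. Qed.

Lemma robot_absent_at_start r : p (S r) 0 = None.
Proof. destruct run as (_ & (_ & H & _) & _); apply H. Qed.

Lemma successor_enters_door r t :
  p r t = Some s -> p r (S t) <> Some s -> p (S r) (S (S t)) = Some s.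
Proof.
  destruct run as (_ & (_ & _ & H & _) & _); intros Ht Hl.
  exact (proj2 (H r t Ht Hl)).
Qed.

Lemma appearance_at_door r t :
  p r t = None -> p r (S t) <> None ->
  exists r' t', r = S r' /\ t = S t' /\ p r' t' = Some s /\ p r' (S t') <> Some s.
Proof. destruct run as (_ & (_ & _ & _ & H) & _); apply H. Qed.

Lemma halted_frozen t r : halted R s p lead t -> p r (S t) = p r t.
Proof.
  destruct run as (_ & _ & _ & H & _); intro Hh.
  exact (proj2 (H t Hh) r).
Qed.

Lemma stopped_frozen t r :
  ~ halted R s p lead t -> r < lead t -> p r (S t) = p r t.
Proof. destruct run as (_ & _ & _ & _ & _ & _ & _ & H & _); apply H. Qed.

Lemma follower_step t r :
  ~ halted R s p lead (S t) -> lead (S t) < S r -> p (S r) (S t) <> None ->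
  p (S r) (S (S t)) = p r t.
Proof.
  destruct run as (_ & _ & _ & _ & _ & _ & _ & _ & H); intros Hh Hlt Hr.
  rewrite (H t (S r) Hh Hlt Hr). f_equal; lia.
Qed.

Lemma leader_step t x :
  ~ halted R s p lead t -> p (lead t) t = Some x ->
  (lead (S t) = lead t /\
     exists y, frontier R p t y /\ p (lead t) (S t) = Some y) \/
  (lead (S t) = S (lead t) /\ p (lead t) (S t) = Some x).
Proof.
  destruct run as (_ & _ & _ & _ & Hmove & Hstop & _); intros Hh Hx.
  destruct (classic (exists y, adj x y /\ frontier R p t y)) as [Hf|Hf].
  - left. destruct (Hmove t x Hh Hx Hf) as (Hl & y & _ & Hy & Hy').
    split; [exact Hl|exists y; auto].
  - right. exact (Hstop t x Hh Hx Hf).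
Qed.

Lemma lead_step t :
  ~ halted R s p lead t -> lead (S t) = lead t \/ lead (S t) = S (lead t).
Proof.
  intro Hh. destruct (p (lead t) t) as [x|] eqn:Ex.
  - destruct (leader_step t x Hh Ex) as [[Hl _]|[Hl _]]; auto.
  - left. destruct run as (_ & _ & _ & _ & _ & _ & H & _). exact (H t Hh Ex).
Qed.

Lemma door_not_frontier t : ~ frontier R p t s.
Proof.
  intros [_ Hf]. apply (Hf 0); [lia|]. exists 0. exact first_robot_on_door.
Qed.

Lemma successor_present_after_door r a :
  p (S r) a <> None -> exists t, S (S t) <= a /\ p r t = Some s.
Proof.
  induction a as [|a IH]; intro Ha.
  - contradiction (Ha (robot_absent_at_start r)).
  - destruct (p (S r) a) eqn:E.
    + destruct IH as (t & Ht & Hs); [congruence|]. exists t; split; [lia|exact Hs].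
    + destruct (appearance_at_door _ _ E Ha) as (r' & t & Hr & -> & Hs & _).
      injection Hr as <-. exists t; split; [lia|exact Hs].
Qed.

(* Followers copy their predecessor's position from two steps back, so the
   step from [t] to [S t] only needs persistence of presence up to [pred t]. *)
Lemma present_step t r :
  (forall r' a, a <= pred t -> p r' a <> None -> p r' (pred t) <> None) ->
  p r t <> None -> p r (S t) <> None.
Proof.
  intros Hprev Hr.
  destruct (classic (halted R s p lead t)) as [Hh|Hh].
  { rewrite halted_frozen by exact Hh. exact Hr. }
  destruct (lt_eq_lt_dec r (lead t)) as [[Hlt| ->]|Hgt].
  - rewrite stopped_frozen by assumption. exact Hr.
  - destruct (p (lead t) t) as [x|] eqn:Ex; [|contradiction].
    destruct (leader_step t x Hh Ex) as [(_ & y & _ & Hy)|(_ & Hy)]; congruence.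
  - destruct r as [|r]; [lia|].
    destruct t as [|t]; [contradiction (Hr (robot_absent_at_start r))|].
    rewrite (follower_step t r Hh Hgt Hr).
    destruct (successor_present_after_door r (S t) Hr) as (t' & Ht' & Hs).
    apply (Hprev r t'); [simpl; lia|congruence].
Qed.

Lemma present_mono a b r : a <= b -> p r a <> None -> p r b <> None.
Proof.
  revert a r. induction b as [b IH] using (well_founded_induction lt_wf).
  intros a r Hab Ha. destruct b as [|b].
  - replace a with 0 in Ha by lia. exact Ha.
  - destruct (Nat.eq_dec a (S b)) as [->|Hne]; [exact Ha|].
    apply present_step.
    + intros r' a' Ha' Hr'. exact (IH (pred b) ltac:(lia) a' r' Ha' Hr').
    + exact (IH b ltac:(lia) a r ltac:(lia) Ha).
Qed.

Lemma predecessor_present v r : p (S r) v <> None -> p r v <> None.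
Proof.
  intro Hv. destruct (successor_present_after_door r v Hv) as (t & Ht & Hs).
  apply (present_mono t); [lia|congruence].
Qed.

Lemma present_below r' r v : r' <= r -> p r v <> None -> p r' v <> None.
Proof.
  induction r as [|r IH]; intros Hle Hr.
  - replace r' with 0 by lia. exact Hr.
  - destruct (Nat.eq_dec r' (S r)) as [->|Hne]; [exact Hr|].
    apply IH; [lia|]. exact (predecessor_present v r Hr).
Qed.

Definition door_blocks_successor (v : nat) : Prop :=
  forall r, p r v = Some s -> p (S r) v = None.

Lemma door_not_entered_before v :
  (forall u, u < v -> door_blocks_successor u) ->
  forall r x, p r v = Some x -> x <> s -> p r (S v) <> Some s.
Proof.
  intros Hblock r x Ex Hxs Hs.
  destruct (classic (halted R s p lead v)) as [Hh|Hh].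
  { rewrite halted_frozen in Hs by exact Hh. congruence. }
  destruct (lt_eq_lt_dec r (lead v)) as [[Hlt| ->]|Hgt].
  - rewrite stopped_frozen in Hs by assumption. congruence.
  - destruct (leader_step v x Hh Ex) as [(_ & y & Hy & Hy')|(_ & Hy)]; [|congruence].
    rewrite Hs in Hy'. injection Hy' as <-. exact (door_not_frontier v Hy).
  - destruct r as [|r]; [lia|].
    destruct v as [|v]; [rewrite robot_absent_at_start in Ex; discriminate|].
    rewrite (follower_step v r Hh Hgt ltac:(congruence)) in Hs.
    destruct (p (S r) v) eqn:E.
    + rewrite (Hblock v ltac:(lia) r Hs) in E. discriminate.
    + destruct (appearance_at_door _ _ E ltac:(congruence))
        as (r' & t & Hr & -> & Ht & Hl).
      injection Hr as <-. rewrite (successor_enters_door r t Ht Hl) in Ex.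
      congruence.
Qed.

Lemma door_blocks_successor_always v : door_blocks_successor v.
Proof.
  induction v as [v IH] using (well_founded_induction lt_wf).
  destruct v as [|v]; intros r Hr; [apply robot_absent_at_start|].
  destruct (p (S r) (S v)) as [z|] eqn:Ez; [exfalso|reflexivity].
  destruct (p (S r) v) as [w|] eqn:Ew.
  - destruct (p r v) as [u|] eqn:Eu.
    + apply (door_not_entered_before v (fun u' Hu' => IH u' ltac:(lia)) r u Eu);
        [|exact Hr].
      intros ->. rewrite (IH v ltac:(lia) r Eu) in Ew. discriminate.
    + apply (predecessor_present v r); congruence.
  - destruct (appearance_at_door _ _ Ew ltac:(congruence))
      as (r' & t & Hr' & -> & Hs & Hl).
    injection Hr' as <-.
    pose proof (occupant_unique _ _ _ _ Hr (successor_enters_door r t Hs Hl)).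
    lia.
Qed.

Lemma door_not_entered v r x :
  p r v = Some x -> x <> s -> p r (S v) <> Some s.
Proof.
  apply door_not_entered_before. intros u _. apply door_blocks_successor_always.
Qed.

Lemma present_after_door t r :
  p r t <> None -> exists a, a <= t /\ p r a = Some s.
Proof.
  induction t as [|t IH]; intro Hr.
  - destruct r as [|r]; [exists 0; split; [lia|exact first_robot_on_door]|].
    contradiction (Hr (robot_absent_at_start r)).
  - destruct (p r t) eqn:E.
    + destruct IH as (a & Ha & Hs); [congruence|]. exists a; split; [lia|exact Hs].
    + destruct (appearance_at_door r t E Hr) as (r' & t' & -> & -> & Hs & Hl).
      exists (S (S t')). split; [lia|exact (successor_enters_door r' t' Hs Hl)].
Qed.

Lemma successor_present_after_leaving_door r a b :
  p r a = Some s -> a <= b -> p r b <> Some s -> p (S r) (S b) <> None.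
Proof.
  intro Ha. induction b as [|b IH]; intros Hab Hb.
  - replace a with 0 in Ha by lia. contradiction.
  - destruct (Nat.eq_dec a (S b)) as [->|Hne]; [contradiction|].
    destruct (classic (p r b = Some s)) as [Hs|Hs].
    + rewrite (successor_enters_door r b Hs Hb). discriminate.
    + apply (present_mono (S b)); [lia|]. apply IH; [lia|exact Hs].
Qed.

Section Move.

Variables (t r : nat) (x : pixel).
Hypothesis (Hx : p r t = Some x) (Hmove : p r (S t) <> Some x).

Lemma mover_not_halted : ~ halted R s p lead t.
Proof. intro Hh. apply Hmove. rewrite halted_frozen by exact Hh. exact Hx. Qed.

Lemma lead_after_move_le : lead (S t) <= r.
Proof.
  pose proof mover_not_halted as Hh.
  assert (Hr : lead t <= r).
  { destruct (le_lt_dec (lead t) r) as [Hle|Hlt]; [exact Hle|].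
    contradiction Hmove. rewrite stopped_frozen by assumption. exact Hx. }
  destruct (Nat.eq_dec r (lead t)) as [->|Hne].
  - destruct (leader_step t x Hh Hx) as [[Hl _]|[_ Hy]]; [lia|contradiction].
  - destruct (lead_step t Hh) as [Hl|Hl]; rewrite Hl; lia.
Qed.

Lemma mover_not_halted_next : ~ halted R s p lead (S t).
Proof.
  intros (t0 & Ht0 & Hc).
  destruct (Nat.eq_dec t0 (S t)) as [->|Hne].
  2: { apply mover_not_halted. exists t0. split; [lia|exact Hc]. }
  destruct Hc as [Hlead _].
  destruct (Nat.eq_dec (lead (S t)) r) as [Heq|Hlow].
  - rewrite Heq in Hlead.
    destruct (classic (x = s)) as [->|Hxs]; [contradiction|].
    exact (door_not_entered t r x Hx Hxs Hlead).
  - apply (present_below (S (lead (S t))) r (S t)).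
    + pose proof lead_after_move_le. lia.
    + apply (present_mono t); [lia|congruence].
    + exact (door_blocks_successor_always (S t) _ Hlead).
Qed.

Lemma vacated_refilled : occupied p (S (S t)) x.
Proof.
  destruct (p (S r) (S t)) as [z|] eqn:Ez.
  - exists (S r).
    rewrite (follower_step t r mover_not_halted_next) by
      (pose proof lead_after_move_le; congruence || lia).
    exact Hx.
  - destruct (classic (x = s)) as [->|Hxs].
    + exists (S r). exact (successor_enters_door r t Hx Hmove).
    + destruct (present_after_door t r ltac:(congruence)) as (a & Ha & Hs).
      contradiction (successor_present_after_leaving_door r a t Hs Ha).
      congruence.
Qed.

End Move.

Lemma occupied_now_or_next a q :
  occupied p a q -> forall b, a <= b -> occupied p b q \/ occupied p (S b) q.
Proof.
  intros Ha b. induction b as [|b IH]; intro Hab.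
  - left. replace a with 0 in Ha by lia. exact Ha.
  - destruct (Nat.eq_dec a (S b)) as [<-|Hne]; [left; exact Ha|].
    destruct (IH ltac:(lia)) as [[r Hr]|Hr]; [|left; exact Hr].
    destruct (classic (p r (S b) = Some q)) as [Hq|Hq].
    + left. exists r. exact Hq.
    + right. exact (vacated_refilled b r q Hr Hq).
Qed.

End DFLF.

Theorem mainTheorem2 :
  forall (R : list pixel) (s : pixel) (p : trajectory) (lead : nat -> nat),
    environment R s ->
    dflf_run R s p lead ->
    forall (q : pixel) (t : nat),
      In q R ->
      ~ occupied p t q ->
      ~ occupied p (S t) q ->
      forall t', (t' < t)%nat -> ~ occupied p t' q.
Proof.
  intros R s p lead _ Hrun q t _ Ht HSt t' Ht' Hq.
  destruct (occupied_now_or_next R s p lead Hrun t' q Hq t) as [H|H]; auto; lia.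
Qed.
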